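(* Let $x\in\mathbb{R}\setminus D$. Then $$d_-T(x)\le \liminf_{n\to\infty} G_n'(x)+1\qquad\text{and}\qquad D^+T(x)\ge \limsup_{n\to\infty} G_n'(x)-1 .$$
   Context: Let $\phi(x)=\operatorname{dist}(x,\mathbb{Z})$ and let $T:\mathbb{R}\to\mathbb{R}$ be the Takagi function $T(x)=\sum_{n=0}^\infty 2^{-n}\phi(2^nx)$. For $n\ge1$ let $D_n=\{k/2^{n-1}:k\in\mathbb{Z}\}$ and let $D=\bigcup_n D_n$ be the set of dyadic rationals. Let $g_k(x)=\operatorname{dist}(x,D_k)$ and $G_n=g_1+\dots+g_n$, so that $T=\sum_{k\ge1}g_k=\lim_n G_n$ pointwise. For $x\notin D$ each $g_k$ is differentiable at $x$ with $g_k'(x)\in\{-1,1\}$, so $G_n'(x)$ is a well-defined integer. For $f:\mathbb{R}\to\mathbb{R}$ the Dini derivatives are $d_-f(x)=\liminf_{h\uparrow0}\frac{f(x+h)-f(x)}{h}$ and $D^+f(x)=\limsup_{h\downarrow0}\frac{f(x+h)-f(x)}{h}$. *)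

From Stdlib Require Import Reals Lra Lia ZArith.
Open Scope R_scope.

Inductive Rbar : Type := Finite (r : R) | p_infty | m_infty.

Definition Rbar_le (a b : Rbar) : Prop :=
  match a, b with
  | m_infty, _ => True
  | _, p_infty => True
  | Finite r, Finite s => r <= s
  | _, _ => False
  end.

Definition Rbar_plus_R (a : Rbar) (c : R) : Rbar :=
  match a with
  | Finite r => Finite (r + c)
  | p_infty => p_infty
  | m_infty => m_infty
  end.

Definition is_sup_Rbar (E : Rbar -> Prop) (l : Rbar) : Prop :=
  (forall y, E y -> Rbar_le y l) /\
  (forall b, (forall y, E y -> Rbar_le y b) -> Rbar_le l b).
Definition is_inf_Rbar (E : Rbar -> Prop) (l : Rbar) : Prop :=
  (forall y, E y -> Rbar_le l y) /\
  (forall b, (forall y, E y -> Rbar_le b y) -> Rbar_le b l).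

Definition is_liminf_seq (u : nat -> R) (l : Rbar) : Prop :=
  is_sup_Rbar
    (fun y => exists N : nat,
       is_inf_Rbar (fun z => exists n, (N <= n)%nat /\ z = Finite (u n)) y) l.
Definition is_limsup_seq (u : nat -> R) (l : Rbar) : Prop :=
  is_inf_Rbar
    (fun y => exists N : nat,
       is_sup_Rbar (fun z => exists n, (N <= n)%nat /\ z = Finite (u n)) y) l.

Definition is_liminf_left0 (q : R -> R) (l : Rbar) : Prop :=
  is_sup_Rbar
    (fun y => exists delta, 0 < delta /\
       is_inf_Rbar (fun z => exists h, - delta < h < 0 /\ z = Finite (q h)) y) l.
Definition is_limsup_right0 (q : R -> R) (l : Rbar) : Prop :=
  is_inf_Rbar
    (fun y => exists delta, 0 < delta /\
       is_sup_Rbar (fun z => exists h, 0 < h < delta /\ z = Finite (q h)) y) l.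

Definition diff_quot (f : R -> R) (x h : R) : R := (f (x + h) - f x) / h.
Definition is_lower_left_dini (f : R -> R) (x : R) (l : Rbar) : Prop :=
  is_liminf_left0 (diff_quot f x) l.
Definition is_upper_right_dini (f : R -> R) (x : R) (l : Rbar) : Prop :=
  is_limsup_right0 (diff_quot f x) l.

(* phi x = dist(x, Z);  up x is the integer with x < up x <= x + 1,
   so floor x = up x - 1 *)
Definition phi (x : R) : R :=
  Rmin (x - (IZR (up x) - 1)) (IZR (up x) - x).

Definition Dn (n : nat) (y : R) : Prop := exists k : Z, y = IZR k / 2 ^ (n - 1).
Definition dyadic (y : R) : Prop := exists n : nat, (1 <= n)%nat /\ Dn n y.

(* g_k x = dist(x, D_k) = phi(2^(k-1) x) / 2^(k-1)   (k >= 1) *)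
Definition g (k : nat) (x : R) : R := phi (2 ^ (k - 1) * x) / 2 ^ (k - 1).

Fixpoint G (n : nat) (x : R) : R :=
  match n with
  | O => 0
  | S m => G m x + g (S m) x
  end.

(* Write e_j = +-1 for the slope of the j-th term phi(2^j y)/2^j of the Takagi
   series at x, so that G_n'(x) = e_0 + ... + e_(n-1).  The proof rests on one
   exact identity: if e_p = s and e_(p+1) = -s (s = +-1), then for the step
   h = s/2^(p+2) the difference quotient of T at x equals G_(p+2)'(x).  Indeed
   the terms j < p are affine on [x, x+h], the terms p and p+1 cancel, and the
   terms j >= p+2 are unchanged because 2^j h is an integer.

   Non-dyadicity of x guarantees that
   both signs occur infinitely often among the e_j.  Combining, arbitrarily
   small steps of the right sign realize difference quotients below
   liminf G_n' + 1 (resp. above limsup G_n' - 1); a little extended-real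
   bookkeeping turns this into the two inequalities. *)

From Stdlib Require Import Reals Lra Lia Classical.
Open Scope R_scope.

Definition flr (w : R) : Z := (up w - 1)%Z.
Definition fr (w : R) : R := w - IZR (flr w).

Lemma flr_spec (w : R) : IZR (flr w) <= w < IZR (flr w) + 1.
Proof. unfold flr; rewrite minus_IZR; destruct (archimed w); simpl; lra. Qed.

Lemma flr_unique (w : R) (z : Z) : IZR z <= w < IZR z + 1 -> flr w = z.
Proof.
  intros H. unfold flr. rewrite <- (tech_up w (z + 1)); [lia | |];
    rewrite plus_IZR; simpl; lra.
Qed.

Lemma fr_range (w : R) : 0 <= fr w < 1.
Proof. unfold fr; pose proof (flr_spec w); lra. Qed.

Lemma fr_shift (u : R) (z : Z) : fr (u + IZR z) = fr u.
Proof.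
  unfold fr. rewrite (flr_unique (u + IZR z) (flr u + z)).
  - rewrite plus_IZR; ring.
  - rewrite plus_IZR; pose proof (flr_spec u); lra.
Qed.

Lemma fr_double (v : R) :
  fr (2 * v) = if Rlt_dec (fr v) (/2) then 2 * fr v else 2 * fr v - 1.
Proof.
  pose proof (flr_spec v). unfold fr in *.
  destruct (Rlt_dec _ _).
  - rewrite (flr_unique (2 * v) (2 * flr v)); rewrite mult_IZR; simpl; lra.
  - rewrite (flr_unique (2 * v) (2 * flr v + 1));
      rewrite plus_IZR, mult_IZR; simpl; lra.
Qed.

Lemma phi_fr (u : R) : phi u = Rmin (fr u) (1 - fr u).
Proof. unfold phi, fr, flr. rewrite minus_IZR. simpl. f_equal; ring. Qed.

Lemma phi_periodic (u : R) (z : Z) : phi (u + IZR z) = phi u.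
Proof. rewrite !phi_fr, fr_shift; reflexivity. Qed.

Lemma phi_rising (n : Z) (u : R) : IZR n <= u <= IZR n + /2 -> phi u = u - IZR n.
Proof.
  intros H. rewrite phi_fr. unfold fr. rewrite (flr_unique u n) by lra.
  apply Rmin_left; lra.
Qed.

Lemma phi_falling (n : Z) (u : R) :
  IZR n + /2 <= u <= IZR n + 1 -> phi u = IZR n + 1 - u.
Proof.
  intros H. rewrite phi_fr. unfold fr. destruct (Req_dec u (IZR n + 1)) as [E | E].
  - rewrite (flr_unique u (n + 1)); rewrite plus_IZR; simpl;
      [rewrite Rmin_left |]; lra.
  - rewrite (flr_unique u n), Rmin_right; lra.
Qed.

(* The slope of phi at a point with fractional part c (c not 0 or 1/2). *)
Definition slope_sign (c : R) : R := if Rlt_dec c (/2) then 1 else -1.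

(* phi is affine around v, as long as the window stays inside the half unit
   interval containing v; the window is measured on the scale of 2v. *)
Lemma phi_local_affine (v w : R) :
  - fr (2 * v) / 2 <= w <= (1 - fr (2 * v)) / 2 ->
  phi (v + w) - phi v = slope_sign (fr v) * w.
Proof.
  rewrite fr_double. unfold slope_sign. pose proof (flr_spec v).
  unfold fr in *. destruct (Rlt_dec _ _); intros Hw.
  - rewrite (phi_rising (flr v) (v + w)), (phi_rising (flr v) v) by lra. ring.
  - rewrite (phi_falling (flr v) (v + w)), (phi_falling (flr v) v) by lra. ring.
Qed.

(* Moving a quarter period towards the peak 1/2 of phi: the change of phi at
   scale v is cancelled by the change at scale 2v (weighted by 1/2). *)
Lemma phi_quarter_cancel (v s : R) : s = 1 \/ s = -1 ->
  slope_sign (fr v) = s -> slope_sign (fr (2 * v)) = - s ->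
  phi (v + s / 4) - phi v + (phi (2 * v + s / 2) - phi (2 * v)) / 2 = 0.
Proof.
  intros Hs. rewrite fr_double. unfold slope_sign.
  pose proof (flr_spec v). unfold fr. set (F := flr v).
  repeat destruct (Rlt_dec _ _); intros E1 E2; destruct Hs; subst s; try lra.
  - rewrite (phi_falling F (v + 1 / 4)), (phi_rising F v),
      (phi_rising (2 * F + 1) (2 * v + 1 / 2)), (phi_falling (2 * F) (2 * v));
      rewrite ?plus_IZR, ?mult_IZR; simpl; lra.
  - rewrite (phi_rising F (v + -1 / 4)), (phi_falling F v),
      (phi_falling (2 * F) (2 * v + -1 / 2)), (phi_rising (2 * F + 1) (2 * v));
      rewrite ?plus_IZR, ?mult_IZR; simpl; lra.
Qed.

Definition frequently (P : nat -> Prop) : Prop :=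
  forall N : nat, exists n : nat, (N <= n)%nat /\ P n.

Fixpoint psum (f : nat -> R) (n : nat) : R :=
  match n with O => 0 | S k => psum f k + f k end.

Lemma psum_opp (f : nat -> R) (n : nat) : psum (fun i => - f i) n = - psum f n.
Proof. induction n; simpl; [ring | rewrite IHn; ring]. Qed.

Lemma psum_minus (f1 f2 : nat -> R) (n : nat) :
  psum (fun j => f1 j - f2 j) n = psum f1 n - psum f2 n.
Proof. induction n; simpl; [ring | rewrite IHn; ring]. Qed.

Lemma psum_stable (f : nat -> R) (M k : nat) :
  (forall j, (M <= j)%nat -> f j = 0) -> psum f (M + k) = psum f M.
Proof.
  intros H; induction k. { rewrite Nat.add_0_r; auto. }
  rewrite Nat.add_succ_r. simpl. rewrite IHk, H by lia. ring.
Qed.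

Section SignSequences.

Variable ep : nat -> R.
Hypothesis ep_sign : forall i, ep i = 1 \/ ep i = -1.

(* The last -1 in [j, j+d]: after it only +1's follow, so the partial sum
   just after it is at most the one at j+d+1. *)
Lemma last_down (d j : nat) : ep j = -1 ->
  exists k, (j <= k <= j + d)%nat /\ ep k = -1 /\ psum ep (k + 1) <= psum ep (j + d + 1).
Proof.
  induction d as [| d IH]; intros Hj.
  - exists j. rewrite Nat.add_0_r. repeat split; auto; try lia; lra.
  - destruct (IH Hj) as [k [Hk [Ek Sk]]].
    destruct (ep_sign (j + S d)%nat) as [E | E].
    + exists k. repeat split; auto; try lia.
      replace (j + S d + 1)%nat with (S (j + d + 1)) by lia. simpl.
      replace (ep (j + d + 1)%nat) with 1 by (rewrite <- E; f_equal; lia). lra.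
    + exists (j + S d)%nat. repeat split; auto; try lia; lra.
Qed.

Lemma run_end (d k : nat) : ep k = -1 -> ep (k + d)%nat = 1 ->
  exists p, (k <= p)%nat /\ ep p = -1 /\ ep (p + 1)%nat = 1 /\
    psum ep (p + 1) <= psum ep (k + 1).
Proof.
  revert k; induction d as [| d IH]; intros k Hk Hd.
  - rewrite Nat.add_0_r in Hd. lra.
  - destruct (ep_sign (k + 1)%nat) as [E | E].
    + exists k. repeat split; auto; try lia; lra.
    + destruct (IH (k + 1)%nat E) as [p [Hp [E1 [E2 S2]]]].
      { replace (k + 1 + d)%nat with (k + S d)%nat by lia. exact Hd. }
      exists p. repeat split; auto; try lia.
      replace (k + 1 + 1)%nat with (S (k + 1)) in S2 by lia. simpl in S2. lra.
Qed.

Lemma frequent_down_up (c : R) :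
  frequently (fun j => ep j = -1) -> frequently (fun j => ep j = 1) ->
  frequently (fun n => psum ep n < c) ->
  frequently (fun p => ep p = -1 /\ ep (p + 1)%nat = 1 /\ psum ep (p + 2) < c + 1).
Proof.
  intros Hdown Hup Hc N.
  destruct (Hdown N) as [j [Hj Ej]].
  destruct (Hc (S j)) as [n [Hn Sn]].
  destruct (last_down (n - j - 1) j Ej) as [k [Hk [Ek Sk]]].
  replace (j + (n - j - 1) + 1)%nat with n in Sk by lia.
  destruct (Hup k) as [i [Hi Ei]].
  destruct (run_end (i - k) k Ek) as [p [Hp [E1 [E2 S2]]]].
  { replace (k + (i - k))%nat with i by lia; auto. }
  exists p. repeat split; auto; try lia.
  replace (p + 2)%nat with (S (p + 1)) by lia. simpl. lra.
Qed.

End SignSequences.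

(* The mirror image of [frequent_down_up], obtained by negating the sequence. *)
Lemma frequent_up_down (ep : nat -> R) (c : R) :
  (forall i, ep i = 1 \/ ep i = -1) ->
  frequently (fun j => ep j = -1) -> frequently (fun j => ep j = 1) ->
  frequently (fun n => psum ep n > c) ->
  frequently (fun p => ep p = 1 /\ ep (p + 1)%nat = -1 /\ psum ep (p + 2) > c - 1).
Proof.
  intros Hsign Hdown Hup Hc N.
  destruct (frequent_down_up (fun i => - ep i)) with (c := - c) (N := N)
    as [p [Hp [E1 [E2 S2]]]].
  - intros i; destruct (Hsign i); lra.
  - intros M; destruct (Hup M) as [j [? ?]]; exists j; split; auto; lra.
  - intros M; destruct (Hdown M) as [j [? ?]]; exists j; split; auto; lra.
  - intros M; destruct (Hc M) as [n [? ?]]; exists n; split; auto.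
    rewrite psum_opp; lra.
  - rewrite psum_opp in S2. exists p; repeat split; auto; lra.
Qed.

(* Powers of 2 are positive integers; integrality makes dyadic steps
   invisible to the high-order terms. *)
Lemma pow2_pos (n : nat) : 0 < 2 ^ n.
Proof. apply pow_lt; lra. Qed.

Lemma pow2_IZR (n : nat) : exists z, 2 ^ n = IZR z.
Proof.
  induction n as [| n [z Hz]]; [exists 1%Z; reflexivity |].
  exists (2 * z)%Z. rewrite mult_IZR, <- Hz. reflexivity.
Qed.

Lemma inv_pow2_small (d : R) : 0 < d -> exists N, forall n, (N <= n)%nat -> / 2 ^ n < d.
Proof.
  intros Hd. destruct (pow_lt_1_zero (/2)) with (y := d) as [N HN];
    [rewrite Rabs_right; lra | auto |].
  exists N. intros n Hn. specialize (HN n Hn).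
  rewrite Rabs_right, pow_inv in HN; auto. apply Rle_ge, pow_le; lra.
Qed.

Lemma fr_orbit_growth (x : R) (i d : nat) :
  fr (2 ^ (i + d) * x) <= 2 ^ d * fr (2 ^ i * x) /\
  1 - fr (2 ^ (i + d) * x) <= 2 ^ d * (1 - fr (2 ^ i * x)).
Proof.
  induction d as [| d IH]; [rewrite Nat.add_0_r; simpl; lra |].
  rewrite Nat.add_succ_r. simpl. rewrite Rmult_assoc, fr_double.
  pose proof (fr_range (2 ^ (i + d) * x)). destruct (Rlt_dec _ _); split; nra.
Qed.

Definition term (n : nat) (y : R) : R := phi (2 ^ n * y) / 2 ^ n.

Lemma g_term (j : nat) (y : R) : g (S j) y = term j y.
Proof. unfold g, term. rewrite Nat.sub_succ, Nat.sub_0_r. reflexivity. Qed.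

Definition slope (x : R) (j : nat) : R := slope_sign (fr (2 ^ j * x)).

Lemma slope_pm (x : R) (j : nat) : slope x j = 1 \/ slope x j = -1.
Proof. unfold slope, slope_sign; destruct (Rlt_dec _ _); auto. Qed.

Lemma term_local_affine (x : R) (j : nat) (h : R) :
  - fr (2 ^ S j * x) / 2 <= 2 ^ j * h <= (1 - fr (2 ^ S j * x)) / 2 ->
  term j (x + h) - term j x = slope x j * h.
Proof.
  intros Hw. unfold term, slope. pose proof (pow2_pos j).
  replace (2 ^ S j * x) with (2 * (2 ^ j * x)) in Hw by (simpl; ring).
  rewrite Rmult_plus_distr_l.
  replace (phi (2 ^ j * x + 2 ^ j * h) / 2 ^ j - phi (2 ^ j * x) / 2 ^ j)
    with ((phi (2 ^ j * x + 2 ^ j * h) - phi (2 ^ j * x)) / 2 ^ j) by (field; lra).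
  rewrite (phi_local_affine _ _ Hw). field. lra.
Qed.

Section NonDyadic.

Variable x : R.
Hypothesis hx : ~ dyadic x.

Lemma fr_orbit_nonzero (j : nat) : fr (2 ^ j * x) <> 0.
Proof.
  intro H. apply hx. exists (S j). split; [lia |].
  exists (flr (2 ^ j * x)). rewrite Nat.sub_succ, Nat.sub_0_r.
  unfold fr in H. pose proof (pow2_pos j).
  replace x with (2 ^ j * x / 2 ^ j) at 1 by (field; lra).
  replace (2 ^ j * x) with (IZR (flr (2 ^ j * x))) at 1 by lra. reflexivity.
Qed.

(* If e_j = +1 from N on, fr(2^j x) would double forever from a positive
   value; hence e_j = -1 infinitely often. *)
Lemma slope_down_frequent : frequently (fun j => slope x j = -1).
Proof.
  intros N. apply NNPP. intro Hn.
  assert (Hlow : forall j, (N <= j)%nat -> fr (2 ^ j * x) < /2).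
  { intros j Hj. destruct (Rlt_dec (fr (2 ^ j * x)) (/2)) as [| Hge]; auto.
    exfalso. apply Hn. exists j. unfold slope, slope_sign.
    destruct (Rlt_dec _ _); [contradiction | auto]. }
  assert (Hdbl : forall d, fr (2 ^ (N + d) * x) = 2 ^ d * fr (2 ^ N * x)).
  { induction d as [| d IH]; [rewrite Nat.add_0_r; simpl; ring |].
    rewrite Nat.add_succ_r. simpl. rewrite Rmult_assoc, fr_double.
    destruct (Rlt_dec _ _) as [_ | Hge]; [rewrite IH; ring |].
    exfalso; apply Hge, Hlow; lia. }
  pose proof (fr_orbit_nonzero N). pose proof (fr_range (2 ^ N * x)).
  destruct (inv_pow2_small (fr (2 ^ N * x))) as [d Hd]; [lra |].
  specialize (Hd d (le_n d)). pose proof (pow2_pos d).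
  pose proof (fr_range (2 ^ (N + d) * x)). rewrite Hdbl in *.
  apply (Rmult_lt_compat_l (2 ^ d)) in Hd; auto. rewrite Rinv_r in Hd; lra.
Qed.

End NonDyadic.

(* Symmetrically, e_j = +1 infinitely often (this holds for every x). *)
Lemma slope_up_frequent (x : R) : frequently (fun j => slope x j = 1).
Proof.
  intros N. apply NNPP. intro Hn.
  assert (Hhigh : forall j, (N <= j)%nat -> ~ fr (2 ^ j * x) < /2).
  { intros j Hj Hl. apply Hn. exists j. unfold slope, slope_sign.
    destruct (Rlt_dec _ _); [auto | contradiction]. }
  assert (Hdbl : forall d, 1 - fr (2 ^ (N + d) * x) = 2 ^ d * (1 - fr (2 ^ N * x))).
  { induction d as [| d IH]; [rewrite Nat.add_0_r; simpl; ring |].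
    rewrite Nat.add_succ_r. simpl. rewrite Rmult_assoc, fr_double.
    destruct (Rlt_dec _ _) as [Hlt | _]; [exfalso; apply (Hhigh (N + d)%nat); auto; lia |].
    rewrite Rmult_assoc, <- IH; ring. }
  pose proof (fr_range (2 ^ N * x)).
  destruct (inv_pow2_small (1 - fr (2 ^ N * x))) as [d Hd]; [lra |].
  specialize (Hd d (le_n d)). pose proof (pow2_pos d).
  pose proof (fr_range (2 ^ (N + d) * x)).
  apply (Rmult_lt_compat_l (2 ^ d)) in Hd; auto. rewrite Rinv_r, <- Hdbl in Hd; lra.
Qed.

(* g_(j+1) is differentiable at non-dyadic x with derivative e_j: it is
   affine on a neighbourhood of x. *)
Lemma derivable_g (x : R) (hx : ~ dyadic x) (j : nat) :
  derivable_pt_lim (g (S j)) x (slope x j).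
Proof.
  intros eps Heps.
  set (c := fr (2 ^ S j * x)).
  assert (Hc : 0 < c < 1).
  { pose proof (fr_orbit_nonzero x hx (S j)). pose proof (fr_range (2 ^ S j * x)).
    unfold c; lra. }
  assert (Hr : 0 < Rmin c (1 - c) / 2 ^ S j).
  { apply Rdiv_lt_0_compat; [apply Rmin_pos; lra | apply pow2_pos]. }
  exists (mkposreal _ Hr). intros h Hh0 Hh. simpl in Hh.
  pose proof (pow2_pos j). pose proof (Rmin_l c (1 - c)). pose proof (Rmin_r c (1 - c)).
  assert (Hwin : Rabs (2 ^ j * h) < Rmin c (1 - c) / 2).
  { rewrite Rabs_mult, (Rabs_right (2 ^ j)) by lra.
    replace (2 ^ S j) with (2 * 2 ^ j) in Hh by reflexivity.
    apply (Rmult_lt_compat_r (2 * 2 ^ j)) in Hh; [| lra].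
    replace (Rmin c (1 - c) / (2 * 2 ^ j) * (2 * 2 ^ j)) with (Rmin c (1 - c)) in Hh
      by (field; lra).
    lra. }
  apply Rabs_def2 in Hwin.
  rewrite !g_term, term_local_affine by (fold c; lra).
  replace (slope x j * h / h - slope x j) with 0 by (field; auto).
  rewrite Rabs_R0; lra.
Qed.

Lemma derivable_G (x : R) (hx : ~ dyadic x) (n : nat) :
  derivable_pt_lim (G n) x (psum (slope x) n).
Proof.
  induction n as [| n IH]; [exact (derivable_pt_lim_const 0 x) |].
  exact (derivable_pt_lim_plus _ _ x _ _ IH (derivable_g x hx n)).
Qed.

Section TakagiSteps.

Variable T : R -> R.
Hypothesis hT : forall y : R, infinite_sum (fun n : nat => phi (2 ^ n * y) / 2 ^ n) (T y).

Lemma takagi_diff (x y : R) (M : nat) :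
  (forall j, (M <= j)%nat -> term j y = term j x) ->
  T y - T x = psum (fun j => term j y - term j x) M.
Proof.
  intros Htail.
  apply (UL_sequence (fun n => sum_f_R0 (fun j => term j y) n - sum_f_R0 (fun j => term j x) n)).
  - apply CV_minus; [exact (hT y) | exact (hT x)].
  - intros eps Heps. exists M. intros n Hn.
    assert (Hsum : forall f k, sum_f_R0 f k = psum f (S k)).
    { intros f k; induction k; simpl in *; [ring | rewrite IHk; ring]. }
    rewrite !Hsum, <- psum_minus.
    replace (S n) with (M + (S n - M))%nat by lia.
    rewrite psum_stable by (intros j Hj; rewrite Htail by auto; ring).
    unfold Rdist. rewrite Rminus_diag, Rabs_R0. lra.
Qed.

End TakagiSteps.

Section DyadicStep.

Variables (x : R) (p : nat) (s : R).
Hypothesis hs : s = 1 \/ s = -1.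
Hypothesis slope_p : slope x p = s.

(* Terms of index >= p+2 do not see the step: 2^j h is an integer. *)
Lemma term_step_high (j : nat) : (p + 2 <= j)%nat ->
  term j (x + s / 2 ^ (p + 2)) = term j x.
Proof.
  intros Hj. unfold term. destruct (pow2_IZR (j - (p + 2))) as [z Hz].
  assert (Hsplit : 2 ^ j = 2 ^ (p + 2) * 2 ^ (j - (p + 2)))
    by (rewrite <- pow_add; f_equal; lia).
  pose proof (pow2_pos (p + 2)).
  destruct hs as [-> | ->].
  - replace (2 ^ j * (x + 1 / 2 ^ (p + 2))) with (2 ^ j * x + IZR z)
      by (rewrite <- Hz, Hsplit; field; lra).
    rewrite phi_periodic; reflexivity.
  - replace (2 ^ j * (x + -1 / 2 ^ (p + 2))) with (2 ^ j * x + IZR (- z))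
      by (rewrite opp_IZR, <- Hz, Hsplit; field; lra).
    rewrite phi_periodic; reflexivity.
Qed.

(* Terms of index < p are affine across the step, because e_p = s leaves at
   least half a unit of room at scale 2^p in direction s. *)
Lemma term_step_low (j : nat) : (j < p)%nat ->
  term j (x + s / 2 ^ (p + 2)) - term j x = slope x j * (s / 2 ^ (p + 2)).
Proof.
  intros Hj. apply term_local_affine.
  destruct (fr_orbit_growth x (S j) (p - S j)) as [A B].
  replace (S j + (p - S j))%nat with p in A, B by lia.
  set (r := 2 ^ (p - S j)) in *. pose proof (pow2_pos (p - S j)).
  assert (Hstep : 2 ^ j * (s / 2 ^ (p + 2)) = s * / (8 * r)).
  { unfold r. replace (p + 2)%nat with (j + (p - S j) + 3)%nat by lia.
    rewrite !pow_add. pose proof (pow2_pos j). simpl. field. lra. }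
  rewrite Hstep. pose proof (fr_range (2 ^ S j * x)).
  assert (Hinv : 8 * r * / (8 * r) = 1) by (field; lra).
  assert (0 < / (8 * r)) by (apply Rinv_0_lt_compat; lra).
  unfold slope, slope_sign in slope_p.
  destruct (Rlt_dec _ _); destruct hs; subst s; try lra; split; nra.
Qed.

Lemma term_step_top : slope x (p + 1) = - s ->
  term p (x + s / 2 ^ (p + 2)) - term p x +
  (term (p + 1) (x + s / 2 ^ (p + 2)) - term (p + 1) x) = 0.
Proof.
  intros slope_p1. unfold term. unfold slope in slope_p, slope_p1.
  assert (E1 : 2 ^ (p + 1) = 2 * 2 ^ p) by (rewrite pow_add; simpl; ring).
  assert (E2 : 2 ^ (p + 2) = 4 * 2 ^ p) by (rewrite pow_add; simpl; ring).
  rewrite E1, Rmult_assoc in slope_p1. rewrite E1, E2.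
  pose proof (pow2_pos p). set (v := 2 ^ p * x) in *.
  replace (2 ^ p * (x + s / (4 * 2 ^ p))) with (v + s / 4) by (unfold v; field; lra).
  replace (2 * 2 ^ p * (x + s / (4 * 2 ^ p))) with (2 * v + s / 2) by (unfold v; field; lra).
  replace (2 * 2 ^ p * x) with (2 * v) by (unfold v; ring).
  pose proof (phi_quarter_cancel v s hs slope_p slope_p1) as Hc.
  apply (Rmult_eq_reg_l (2 ^ p)); [| lra].
  rewrite Rmult_0_r, <- Hc. field. lra.
Qed.

End DyadicStep.

Lemma dyadic_step_quotient (T : R -> R)
  (hT : forall y : R, infinite_sum (fun n : nat => phi (2 ^ n * y) / 2 ^ n) (T y))
  (x : R) (p : nat) (s : R) (hs : s = 1 \/ s = -1) :
  slope x p = s -> slope x (p + 1) = - s ->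
  diff_quot T x (s / 2 ^ (p + 2)) = psum (slope x) (p + 2).
Proof.
  intros E1 E2. unfold diff_quot. set (h := s / 2 ^ (p + 2)).
  rewrite (takagi_diff T hT x (x + h) (p + 2)) by (intros; apply term_step_high; auto).
  assert (Hlow : forall k, (k <= p)%nat ->
            psum (fun j => term j (x + h) - term j x) k = h * psum (slope x) k).
  { induction k; intros Hk; simpl; [ring |].
    rewrite IHk by lia. unfold h. rewrite (term_step_low x p s hs E1 k) by lia. ring. }
  pose proof (term_step_top x p s hs E1 E2) as Htop. fold h in Htop.
  assert (Hh0 : h <> 0).
  { pose proof (pow2_pos (p + 2)). unfold h, Rdiv.
    apply Rmult_integral_contrapositive; split; [destruct hs; lra |].
    apply Rinv_neq_0_compat; lra. }
  replace (p + 2)%nat with (S (S p)) by lia. replace (p + 1)%nat with (S p) in * by lia.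
  simpl. rewrite Hlow by lia. rewrite E1, E2.
  replace (h * psum (slope x) p + (term p (x + h) - term p x) +
           (term (S p) (x + h) - term (S p) x)) with (h * psum (slope x) p) by lra.
  field. exact Hh0.
Qed.

Definition Rbar_below (L : Rbar) (c : R) : Prop :=
  match L with Finite r => r < c | m_infty => True | p_infty => False end.
Definition Rbar_above (L : Rbar) (c : R) : Prop :=
  match L with Finite r => c < r | p_infty => True | m_infty => False end.

Lemma Rbar_below_shift (L : Rbar) (r c : R) :
  Rbar_below (Rbar_plus_R L r) c -> Rbar_below L (c - r).
Proof. destruct L; simpl; auto; lra. Qed.

Lemma Rbar_above_shift (L : Rbar) (r c : R) :
  Rbar_above (Rbar_plus_R L r) c -> Rbar_above L (c - r).
Proof. destruct L; simpl; auto; lra. Qed.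

Lemma Rbar_le_of_below (y L : Rbar) :
  (forall c, Rbar_below L c -> Rbar_le y (Finite c)) -> Rbar_le y L.
Proof.
  intros H. destruct L as [l | |], y as [r | |]; simpl; auto.
  - apply Rnot_lt_le; intro Hlt. specialize (H ((r + l) / 2)). simpl in H. lra.
  - apply (H (l + 1)). simpl; lra.
  - specialize (H (r - 1) I). simpl in H. lra.
  - exact (H 0 I).
Qed.

Lemma Rbar_le_of_above (y L : Rbar) :
  (forall c, Rbar_above L c -> Rbar_le (Finite c) y) -> Rbar_le L y.
Proof.
  intros H. destruct L as [l | |], y as [r | |]; simpl; auto.
  - apply Rnot_lt_le; intro Hlt. specialize (H ((r + l) / 2)). simpl in H. lra.
  - apply (H (l - 1)). simpl; lra.
  - specialize (H (r + 1) I). simpl in H. lra.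
  - exact (H 0 I).
Qed.

Lemma tail_inf_exists (u : nat -> R) (N : nat) (c : R) :
  (forall n, (N <= n)%nat -> c <= u n) ->
  exists m, c <= m /\
    is_inf_Rbar (fun z => exists n, (N <= n)%nat /\ z = Finite (u n)) (Finite m).
Proof.
  intros Hc.
  destruct (completeness (fun r => exists n, (N <= n)%nat /\ r = - u n)) as [m [Hub Hlub]].
  - exists (- c). intros r [n [Hn ->]]. specialize (Hc n Hn). lra.
  - exists (- u N), N. auto.
  - exists (- m). split.
    + assert (m <= - c) by (apply Hlub; intros r [n [Hn ->]]; specialize (Hc n Hn); lra).
      lra.
    + split.
      * intros y [n [Hn ->]]. simpl. assert (- u n <= m) by (apply Hub; eauto). lra.
      * intros b Hb. destruct b as [r | |]; simpl; auto.
        -- assert (m <= - r); [| lra].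
           apply Hlub. intros z [n [Hn ->]].
           specialize (Hb (Finite (u n)) (ex_intro _ n (conj Hn eq_refl))). simpl in Hb. lra.
        -- exact (Hb (Finite (u N)) (ex_intro _ N (conj (le_n N) eq_refl))).
Qed.

Lemma tail_sup_exists (u : nat -> R) (N : nat) (c : R) :
  (forall n, (N <= n)%nat -> u n <= c) ->
  exists m, m <= c /\
    is_sup_Rbar (fun z => exists n, (N <= n)%nat /\ z = Finite (u n)) (Finite m).
Proof.
  intros Hc.
  destruct (completeness (fun r => exists n, (N <= n)%nat /\ r = u n)) as [m [Hub Hlub]].
  - exists c. intros r [n [Hn ->]]. auto.
  - exists (u N), N. auto.
  - exists m. split.
    + apply Hlub. intros r [n [Hn ->]]. auto.
    + split.
      * intros y [n [Hn ->]]. simpl. apply Hub; eauto.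
      * intros b Hb. destruct b as [r | |]; simpl; auto.
        -- apply Hlub. intros z [n [Hn ->]].
           specialize (Hb (Finite (u n)) (ex_intro _ n (conj Hn eq_refl))). exact Hb.
        -- exact (Hb (Finite (u N)) (ex_intro _ N (conj (le_n N) eq_refl))).
Qed.

Lemma liminf_below_frequently (u : nat -> R) (l : Rbar) (c : R) :
  is_liminf_seq u l -> Rbar_below l c -> frequently (fun n => u n < c).
Proof.
  intros Hl Hc N. apply NNPP; intro Hn.
  destruct (tail_inf_exists u N c) as [m [Hm Hinf]].
  { intros n Hn'. apply Rnot_lt_le. intro Hlt. apply Hn. eauto. }
  pose proof (proj1 Hl (Finite m) (ex_intro _ N Hinf)) as Hle.
  destruct l; simpl in *; lra.
Qed.

Lemma limsup_above_frequently (u : nat -> R) (l : Rbar) (c : R) :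
  is_limsup_seq u l -> Rbar_above l c -> frequently (fun n => c < u n).
Proof.
  intros Hl Hc N. apply NNPP; intro Hn.
  destruct (tail_sup_exists u N c) as [m [Hm Hsup]].
  { intros n Hn'. apply Rnot_lt_le. intro Hlt. apply Hn. eauto. }
  pose proof (proj1 Hl (Finite m) (ex_intro _ N Hsup)) as Hle.
  destruct l; simpl in *; lra.
Qed.

Lemma liminf_left0_le (q : R -> R) (l L : Rbar) :
  is_liminf_left0 q l ->
  (forall c, Rbar_below L c -> forall d, 0 < d -> exists h, - d < h < 0 /\ q h < c) ->
  Rbar_le l L.
Proof.
  intros Hl Hq. apply (proj2 Hl). intros y [d [Hd Hinf]].
  apply Rbar_le_of_below. intros c Hc.
  destruct (Hq c Hc d Hd) as [h [Hh Hqh]].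
  pose proof (proj1 Hinf (Finite (q h)) (ex_intro _ h (conj Hh eq_refl))) as Hy.
  destruct y; simpl in *; auto; lra.
Qed.

Lemma limsup_right0_ge (q : R -> R) (l L : Rbar) :
  is_limsup_right0 q l ->
  (forall c, Rbar_above L c -> forall d, 0 < d -> exists h, 0 < h < d /\ c < q h) ->
  Rbar_le L l.
Proof.
  intros Hl Hq. apply (proj2 Hl). intros y [d [Hd Hsup]].
  apply Rbar_le_of_above. intros c Hc.
  destruct (Hq c Hc d Hd) as [h [Hh Hqh]].
  pose proof (proj1 Hsup (Finite (q h)) (ex_intro _ h (conj Hh eq_refl))) as Hy.
  destruct y; simpl in *; auto; lra.
Qed.

Section SmallSteps.

Variable T : R -> R.
Hypothesis hT : forall y : R, infinite_sum (fun n : nat => phi (2 ^ n * y) / 2 ^ n) (T y).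
Variable x : R.
Hypothesis hx : ~ dyadic x.

(* If G_n'(x) < c infinitely often, arbitrarily small negative steps give
   difference quotients below c + 1: use the patterns (-1, +1). *)
Lemma left_steps_below (c : R) :
  frequently (fun n => psum (slope x) n < c) ->
  forall d, 0 < d -> exists h, - d < h < 0 /\ diff_quot T x h < c + 1.
Proof.
  intros Hc d Hd. destruct (inv_pow2_small d Hd) as [N HN].
  destruct (frequent_down_up (slope x) (slope_pm x) c
              (slope_down_frequent x hx) (slope_up_frequent x) Hc N)
    as [p [Hp [E1 [E2 Hsum]]]].
  exists (-1 / 2 ^ (p + 2)). split.
  - specialize (HN (p + 2)%nat ltac:(lia)). pose proof (pow2_pos (p + 2)).
    pose proof (Rinv_0_lt_compat (2 ^ (p + 2)) ltac:(lra)). unfold Rdiv. lra.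
  - rewrite (dyadic_step_quotient T hT x p (-1)); auto. rewrite E2; ring.
Qed.

(* Symmetrically, with the patterns (+1, -1) and positive steps. *)
Lemma right_steps_above (c : R) :
  frequently (fun n => c < psum (slope x) n) ->
  forall d, 0 < d -> exists h, 0 < h < d /\ c - 1 < diff_quot T x h.
Proof.
  intros Hc d Hd. destruct (inv_pow2_small d Hd) as [N HN].
  destruct (frequent_up_down (slope x) c (slope_pm x)
              (slope_down_frequent x hx) (slope_up_frequent x) Hc N)
    as [p [Hp [E1 [E2 Hsum]]]].
  exists (1 / 2 ^ (p + 2)). split.
  - specialize (HN (p + 2)%nat ltac:(lia)). pose proof (pow2_pos (p + 2)).
    pose proof (Rinv_0_lt_compat (2 ^ (p + 2)) ltac:(lra)). unfold Rdiv. lra.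
  - rewrite (dyadic_step_quotient T hT x p 1); auto.
Qed.

End SmallSteps.

Theorem proposition2p1
  (T : R -> R)
  (hT : forall y : R, infinite_sum (fun n : nat => phi (2 ^ n * y) / 2 ^ n) (T y))
  (x : R) (hx : ~ dyadic x)
  (Gd : nat -> R)
  (hGd : forall n : nat, (1 <= n)%nat -> derivable_pt_lim (G n) x (Gd n))
  (dminus Dplus liminfG limsupG : Rbar)
  (h1 : is_lower_left_dini T x dminus)
  (h2 : is_upper_right_dini T x Dplus)
  (h3 : is_liminf_seq Gd liminfG)
  (h4 : is_limsup_seq Gd limsupG) :
  Rbar_le dminus (Rbar_plus_R liminfG 1) /\
  Rbar_le (Rbar_plus_R limsupG (-1)) Dplus.
Proof.
  assert (HG : forall n, (1 <= n)%nat -> Gd n = psum (slope x) n).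
  { intros n Hn. exact (uniqueness_limite _ _ _ _ (hGd n Hn) (derivable_G x hx n)). }
  split.
  - apply (liminf_left0_le _ _ _ h1). intros c Hc d Hd.
    assert (Hfreq : frequently (fun n => psum (slope x) n < c - 1)).
    { intros N.
      destruct (liminf_below_frequently Gd liminfG (c - 1) h3
                  (Rbar_below_shift _ _ _ Hc) (S N)) as [n [Hn Hlt]].
      exists n. rewrite <- HG by lia. split; [lia | exact Hlt]. }
    destruct (left_steps_below T hT x hx (c - 1) Hfreq d Hd) as [h [Hh Hq]].
    exists h. split; [exact Hh | lra].
  - apply (limsup_right0_ge _ _ _ h2). intros c Hc d Hd.
    assert (Hfreq : frequently (fun n => c + 1 < psum (slope x) n)).
    { replace (c + 1) with (c - -1) by ring. intros N.
      destruct (limsup_above_frequently Gd limsupG (c - -1) h4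
                  (Rbar_above_shift _ _ _ Hc) (S N)) as [n [Hn Hlt]].
      exists n. rewrite <- HG by lia. split; [lia | exact Hlt]. }
    destruct (right_steps_above T hT x hx (c + 1) Hfreq d Hd) as [h [Hh Hq]].
    exists h. split; [exact Hh | lra].
Qed.
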